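(* Let $p$ be an odd prime and let $\zeta\in\mathbb{Z}_p$ be such that $-\zeta$ is not a square modulo $p$. Let $k\ge0$ and let $A,B,C,A',B',C'\in\mathbb{Z}_p$ with $p^k$ dividing each of $B,C,B',C'$. Suppose that, coefficientwise, $$(x^2+pA+\zeta)^2-p^2(Bx+C)^2\equiv (x^2+pA'+\zeta)^2-p^2(B'x+C')^2\pmod{p^{2k+3}}.$$ Then $A\equiv A'\pmod{p^{2k+2}}$. Consequently $(x^2+pA+\zeta)^2\equiv(x^2+pA'+\zeta)^2\pmod{p^{2k+3}}$. *)

From HB Require Import structures.
From mathcomp Require Import all_boot all_order all_algebra.
From mathcomp Require Import boolp.
From Stdlib Require Import ProofIrrelevance FunctionalExtensionality.

Set Implicit Arguments.
Unset Strict Implicit.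
Unset Printing Implicit Defensive.

Import Order.TTheory GRing.Theory Num.Theory.
Local Open Scope ring_scope.

(* The ring Z_p of p-adic integers, constructed as the inverse limit         *)
(*   Z_p = lim_n Z/p^n Z,                                                    *)
(* i.e. sequences (x_n)_n of integers with x_n the canonical representative  *)
(* (in [0, p^n)) of a residue mod p^n, compatible under reduction:           *)
(*   x_{n+1} mod p^n = x_n.                                                  *)
(* (For a degenerate p < 2 we use the base maxn p 2, as MathComp does for    *)
(* 'Z_p; the theorem below assumes p prime, where the base is exactly p.)    *)

Definition zbase (p : nat) : int := (maxn p 2)%:Z.

Lemma modz_modM (x m d : int) : modz (modz x (m * d)) m = modz x m.
Proof.
by rewrite [in RHS](intdiv.divz_eq x (m * d)) (mulrC m d) mulrA modzMDl.
Qed.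

Record Zpadic (p : nat) : Type := MkZp {
  zv : nat -> int;
  zv_compat : forall n, modz (zv n.+1) (zbase p ^+ n) = zv n
}.

Section ZpRing.
Variable p : nat.
Local Notation b := (zbase p).

Lemma zp_eq (x y : Zpadic p) : zv x = zv y -> x = y.
Proof.
case: x y => [f Hf] [g Hg] /= E; subst g.
by rewrite (proof_irrelevance _ Hf Hg).
Qed.

Lemma zv_mod (x : Zpadic p) n : modz (zv x n) (b ^+ n) = zv x n.
Proof. by rewrite -zv_compat modz_mod. Qed.

Lemma mkZ_compat (f : nat -> int)
  (H : forall n, modz (f n.+1) (b ^+ n) = modz (f n) (b ^+ n)) n :
  modz (modz (f n.+1) (b ^+ n.+1)) (b ^+ n) = modz (f n) (b ^+ n).
Proof. by rewrite exprSr modz_modM H. Qed.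

Definition mkZ (f : nat -> int)
  (H : forall n, modz (f n.+1) (b ^+ n) = modz (f n) (b ^+ n)) : Zpadic p :=
  @MkZp p (fun n => modz (f n) (b ^+ n)) (mkZ_compat H).

Lemma zv_mkZ f H n : zv (@mkZ f H) n = modz (f n) (b ^+ n).
Proof. by []. Qed.

Definition zp_zero : Zpadic p := @mkZ (fun _ => 0) (fun n => erefl).
Definition zp_one : Zpadic p := @mkZ (fun _ => 1) (fun n => erefl).

Lemma zp_add_compat (x y : Zpadic p) n :
  modz (zv x n.+1 + zv y n.+1) (b ^+ n) = modz (zv x n + zv y n) (b ^+ n).
Proof. by rewrite -modzDm !zv_compat. Qed.
Definition zp_add (x y : Zpadic p) : Zpadic p := mkZ (zp_add_compat x y).

Lemma zp_opp_compat (x : Zpadic p) n :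
  modz (- zv x n.+1) (b ^+ n) = modz (- zv x n) (b ^+ n).
Proof. by rewrite -modzNm zv_compat. Qed.
Definition zp_opp (x : Zpadic p) : Zpadic p := mkZ (zp_opp_compat x).

Lemma zp_mul_compat (x y : Zpadic p) n :
  modz (zv x n.+1 * zv y n.+1) (b ^+ n) = modz (zv x n * zv y n) (b ^+ n).
Proof. by rewrite -modzMm !zv_compat. Qed.
Definition zp_mul (x y : Zpadic p) : Zpadic p := mkZ (zp_mul_compat x y).

HB.instance Definition _ := gen_eqMixin (Zpadic p).
HB.instance Definition _ := gen_choiceMixin (Zpadic p).

Lemma zp_addA : associative zp_add.
Proof.
move=> x y z; apply: zp_eq; apply: functional_extensionality => n /=.
by rewrite modzDmr modzDml addrA.
Qed.

Lemma zp_addC : commutative zp_add.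
Proof.
by move=> x y; apply: zp_eq; apply: functional_extensionality => n /=; rewrite addrC.
Qed.

Lemma zp_add0 : left_id zp_zero zp_add.
Proof.
by move=> x; apply: zp_eq; apply: functional_extensionality => n /=;
  rewrite mod0z add0r zv_mod.
Qed.

Lemma zp_addN : left_inverse zp_zero zp_opp zp_add.
Proof.
by move=> x; apply: zp_eq; apply: functional_extensionality => n /=;
  rewrite modzDml addNr.
Qed.

HB.instance Definition _ := GRing.isZmodule.Build (Zpadic p)
  zp_addA zp_addC zp_add0 zp_addN.

Lemma zp_mulA : associative zp_mul.
Proof.
move=> x y z; apply: zp_eq; apply: functional_extensionality => n /=.
by rewrite modzMmr modzMml mulrA.
Qed.

Lemma zp_mulC : commutative zp_mul.
Proof.
by move=> x y; apply: zp_eq; apply: functional_extensionality => n /=; rewrite mulrC.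
Qed.

Lemma zp_mul1 : left_id zp_one zp_mul.
Proof.
by move=> x; apply: zp_eq; apply: functional_extensionality => n /=;
  rewrite modzMml mul1r zv_mod.
Qed.

Lemma zp_mulDl : left_distributive zp_mul zp_add.
Proof.
move=> x y z; apply: zp_eq; apply: functional_extensionality => n /=.
by rewrite modzMml modzDm mulrDl.
Qed.

Lemma zp_one_neq0 : zp_one != zp_zero.
Proof.
apply/eqP => /(f_equal (fun z => zv z 1%N)) /=.
rewrite expr1 mod0z modz_small //.
by rewrite ler01 /= /zbase ltz_nat leq_max orbT.
Qed.

HB.instance Definition _ := GRing.Zmodule_isComNzRing.Build (Zpadic p)
  zp_mulA zp_mulC zp_mul1 zp_mulDl zp_one_neq0.

End ZpRing.

Definition rdvd (R : comNzRingType) (d x : R) : Prop := exists y : R, x = d * y.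

Definition polycong (R : comNzRingType) (m : R) (P Q : {poly R}) : Prop :=
  forall i : nat, rdvd m (P`_i - Q`_i).

From HB Require Import structures.
From mathcomp Require Import all_boot all_order all_algebra.
From mathcomp Require Import ring.
From Stdlib Require Import FunctionalExtensionality.

(* Write B = p^k b, C = p^k c, B' = p^k b', C' = p^k c'.  The x^2-coefficients give
   2p(A - A') = p^(2k+2) (b^2 - b'^2) mod p^(2k+3), so A - A' = p^(2k+1) d.  Dividing
   the three coefficient congruences by p^(2k+2) and reducing mod p leaves, in F_p,
     2d = b^2 - b'^2,    bc = b'c',    2 zeta d = c^2 - c'^2,
   i.e. (c + b s)^2 = (c' + b' s)^2 for a square root s of -zeta.  As -zeta is not a
   square this forces b^2 = b'^2, hence d = 0 mod p. *)

Set Implicit Arguments.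
Unset Strict Implicit.
Unset Printing Implicit Defensive.

Import GRing.Theory Num.Theory.
Local Open Scope ring_scope.

Lemma eq_of_subr_eq (V : zmodType) (l r x y : V) : x = y -> l - r = x - y -> l = r.
Proof. by move=> -> /eqP; rewrite subrr subr_eq0 => /eqP. Qed.

Lemma rdvd_eq_trans (R : comNzRingType) (m x y : R) : rdvd m x -> x = y -> rdvd m y.
Proof. by move=> + <-. Qed.

Section NonsquareField.
Variables (F : fieldType) (z : F).
Hypothesis nonsquare : forall s : F, s ^+ 2 + z != 0.

Lemma nonsquare_neq0 : z != 0.
Proof. by have := nonsquare 0; rewrite expr0n add0r. Qed.

Lemma sqr_add_nonsquare_eq0 (t w : F) : t ^+ 2 + z * w ^+ 2 = 0 -> w = 0.
Proof.
move=> E; apply/eqP; apply: contraT => w_neq0; have := nonsquare (t / w).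
have -> : (t / w) ^+ 2 + z = (t ^+ 2 + z * w ^+ 2) / w ^+ 2 by field.
by rewrite E mul0r eqxx.
Qed.

Hypothesis two_neq0 : (2%:R : F) != 0.

Lemma sqr_eq_of_nonsquare (b b' c c' : F) :
  b * c = b' * c' -> c ^+ 2 - z * b ^+ 2 = c' ^+ 2 - z * b' ^+ 2 ->
  b ^+ 2 = b' ^+ 2.
Proof.
move=> Ebc Ev.
(* Norms from F(sqrt(-z)): c^2 + z b^2 = +-(c'^2 + z b'^2); the minus sign would make
   c^2 + z b'^2 vanish, so that b' = 0 and likewise b = 0. *)
have : (c ^+ 2 + z * b ^+ 2) ^+ 2 == (c' ^+ 2 + z * b' ^+ 2) ^+ 2.
  have sqr_sum (u v : F) : (u ^+ 2 + z * v ^+ 2) ^+ 2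
      = (u ^+ 2 - z * v ^+ 2) ^+ 2 + 4%:R * z * (v * u) ^+ 2 by ring.
  by rewrite !sqr_sum Ev Ebc.
rewrite eqf_sqr => /orP[/eqP Eu | /eqP Eu].
  have : (2%:R * z) * (b ^+ 2 - b' ^+ 2) = 0.
    transitivity ((c ^+ 2 + z * b ^+ 2) - (c' ^+ 2 + z * b' ^+ 2)
      - ((c ^+ 2 - z * b ^+ 2) - (c' ^+ 2 - z * b' ^+ 2))); first ring.
    by rewrite Eu Ev !subrr.
  by move/eqP; rewrite !mulf_eq0 (negbTE two_neq0) (negbTE nonsquare_neq0) subr_eq0 => /eqP.
have Eb : c' ^+ 2 + z * b ^+ 2 = 0.
  apply: (mulfI two_neq0); rewrite mulr0.
  transitivity ((c ^+ 2 + z * b ^+ 2) + (c' ^+ 2 + z * b' ^+ 2)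
    - ((c ^+ 2 - z * b ^+ 2) - (c' ^+ 2 - z * b' ^+ 2))); first ring.
  by rewrite Eu Ev addNr !subrr.
have Eb' : c ^+ 2 + z * b' ^+ 2 = 0.
  apply: (mulfI two_neq0); rewrite mulr0.
  transitivity ((c ^+ 2 + z * b ^+ 2) + (c' ^+ 2 + z * b' ^+ 2)
    + ((c ^+ 2 - z * b ^+ 2) - (c' ^+ 2 - z * b' ^+ 2))); first ring.
  by rewrite Eu Ev addNr subrr addr0.
by rewrite (sqr_add_nonsquare_eq0 Eb) (sqr_add_nonsquare_eq0 Eb').
Qed.

Lemma eq0_of_nonsquare_eqs (b b' c c' d : F) :
  d *+ 2 = b ^+ 2 - b' ^+ 2 -> b * c = b' * c' ->
  z * d *+ 2 = c ^+ 2 - c' ^+ 2 -> d = 0.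
Proof.
move=> E2 Ebc E0.
have Ev : c ^+ 2 - z * b ^+ 2 = c' ^+ 2 - z * b' ^+ 2.
  apply/eqP; rewrite -subr_eq0; apply/eqP.
  transitivity ((c ^+ 2 - c' ^+ 2) - z * (b ^+ 2 - b' ^+ 2)); first by ring.
  by rewrite -E2 -E0 mulrnAr subrr.
move: E2; rewrite (sqr_eq_of_nonsquare Ebc Ev) subrr -mulr_natr => /eqP.
by rewrite mulf_eq0 (negbTE two_neq0) orbF => /eqP.
Qed.

End NonsquareField.

Section PadicIntegers.
Variable p : nat.
Hypothesis p_prime : prime p.
Local Notation R := (Zpadic p).
Local Notation P := (p%:R : R).

Lemma zbaseE : zbase p = p%:Z.
Proof. by rewrite /zbase; congr Posz; apply/maxn_idPl; exact: prime_gt1. Qed.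

Lemma p_gtz0 : 0 < p%:Z.
Proof. by rewrite ltz_nat prime_gt0. Qed.

Lemma zv0 n : zv (0 : R) n = 0.
Proof. by rewrite /= mod0z. Qed.

Lemma zv_at0 (x : R) : zv x 0 = 0.
Proof. by rewrite -zv_mod expr0 modz1. Qed.

Lemma zv_nat m n : zv (m%:R : R) n = (m%:Z %% zbase p ^+ n)%Z.
Proof.
elim: m => [|m IH]; first by rewrite zv0 mod0z.
by rewrite mulrS [LHS]/= IH modzDm -addn1 PoszD addrC.
Qed.

Lemma zv_pmulS (x : R) n : zv (P * x) n.+1 = p%:Z * zv x n.
Proof.
rewrite [LHS]/= zv_nat modzMml zbaseE exprS -mulz_modr ?p_gtz0 //.
by rewrite -zbaseE zv_compat zbaseE.
Qed.

Lemma lreg_p : GRing.lreg P.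
Proof.
apply: mulrI0_lreg => x Px0; apply: zp_eq; apply: functional_extensionality => n.
have := zv_pmulS x n; rewrite Px0 zv0 zv0 => /esym/eqP.
by rewrite mulf_eq0 (negbTE (lt0r_neq0 p_gtz0)) => /eqP.
Qed.

Lemma lreg_pX n : GRing.lreg (P ^+ n).
Proof. exact: lregX lreg_p. Qed.

Lemma zv_modp (x : R) n : (zv x n.+1 %% p)%Z = zv x 1.
Proof.
elim: n => [|n IH]; first by rewrite -[p%:Z]expr1 -zbaseE zv_mod.
by rewrite -(modz_modM _ p%:Z (p%:Z ^+ n)) -exprS -zbaseE zv_compat zbaseE.
Qed.

Lemma rdvd_p_of_dvdz (x : R) : (p%:Z %| zv x 1)%Z -> rdvd P x.
Proof.
move=> /dvdz_mod0P dvd1.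
have dvd n : (p%:Z %| zv x n.+1)%Z by apply/dvdz_mod0P; rewrite zv_modp -(zv_modp x 0).
pose f n := (zv x n.+1 %/ p)%Z.
have fE n : zv x n.+1 = f n * p by rewrite divzK.
have f_compat n : (f n.+1 %% zbase p ^+ n)%Z = f n.
  apply: (mulfI (lt0r_neq0 p_gtz0)); rewrite zbaseE mulz_modr ?p_gtz0 // -exprS.
  by rewrite !(mulrC p%:Z) -!fE -zbaseE zv_compat.
exists (MkZp f_compat); apply: zp_eq; apply: functional_extensionality => -[|n].
  by rewrite !zv_at0.
by rewrite zv_pmulS /= mulrC -fE.
Qed.

Definition residue (x : R) : 'F_p := (zv x 1)%:~R.

Lemma intr_Fp_modp (a : int) : ((a %% p)%Z%:~R : 'F_p) = a%:~R.
Proof.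
rewrite /modz intrB intrM.
by rewrite (_ : (p%:Z)%:~R = 0) ?mulr0 ?subr0 // -pmulrn (pchar_Fp_0 p_prime).
Qed.

Lemma residue_is_zmod_morphism : zmod_morphism residue.
Proof.
move=> x y; rewrite /residue [zv _ _]/= zbaseE expr1 intr_Fp_modp intrD.
by rewrite intr_Fp_modp intrN.
Qed.

Lemma residue_is_monoid_morphism : monoid_morphism residue.
Proof.
split; first by rewrite /residue [zv _ _]/= zbaseE expr1 intr_Fp_modp.
by move=> x y; rewrite /residue [zv _ _]/= zbaseE expr1 intr_Fp_modp intrM.
Qed.

HB.instance Definition _ :=
  GRing.isZmodMorphism.Build R 'F_p residue residue_is_zmod_morphism.
HB.instance Definition _ :=
  GRing.isMonoidMorphism.Build R 'F_p residue residue_is_monoid_morphism.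

Lemma residue_eq0P (x : R) : residue x = 0 <-> rdvd P x.
Proof.
split=> [|[y ->]]; last by rewrite rmorphM rmorph_nat (pchar_Fp_0 p_prime) mul0r.
by move/eqP; rewrite -(dvdz_pcharf (pchar_Fp p_prime)); exact: rdvd_p_of_dvdz.
Qed.

Lemma two_Fp_neq0 : odd p -> (2%:R : 'F_p) != 0.
Proof.
move=> p_odd; rewrite -(dvdn_pcharf (pchar_Fp p_prime)).
apply: contraL p_odd => /(dvdn_leq (isT : (0 < 2)%N)) p_le2.
by have -> : p = 2%N by apply/anti_leq; rewrite p_le2 prime_gt1.
Qed.

Lemma rdvd_p_mul2 (x : R) : odd p -> rdvd P (x *+ 2) -> rdvd P x.
Proof.
move=> p_odd /residue_eq0P; rewrite rmorphMn -mulr_natr => /eqP.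
by rewrite mulf_eq0 (negbTE (two_Fp_neq0 p_odd)) orbF => /eqP /residue_eq0P.
Qed.

Lemma rdvd_pX_mul2 n (x : R) : odd p -> rdvd (P ^+ n) (x *+ 2) -> rdvd (P ^+ n) x.
Proof.
move=> p_odd; elim: n x => [|n IH] x; first by exists x; rewrite expr0 mul1r.
case=> y Ey.
have [z Ez] : rdvd (P ^+ n) x by apply: IH; exists (P * y); rewrite Ey exprSr mulrA.
have [w Ew] : rdvd P z.
  apply: rdvd_p_mul2 => //; exists y; apply: (@lreg_pX n).
  by rewrite mulrnAr -Ez Ey exprSr mulrA.
by exists w; rewrite Ez Ew exprSr mulrA.
Qed.

Lemma rdvd_p_of_residue_eqs (zeta b b' c c' d : R) : odd p ->
  ~ (exists x : R, rdvd P (x ^+ 2 + zeta)) ->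
  rdvd P (d *+ 2 - (b ^+ 2 - b' ^+ 2)) ->
  rdvd P (b * c - b' * c') ->
  rdvd P (zeta * d *+ 2 - (c ^+ 2 - c' ^+ 2)) -> rdvd P d.
Proof.
move=> p_odd nonsq /residue_eq0P E2 /residue_eq0P E1 /residue_eq0P E0.
rewrite !(rmorphB, rmorphXn, rmorphMn, rmorphM) in E2 E1 E0.
have nonsqF (s : 'F_p) : s ^+ 2 + residue zeta != 0.
  apply/eqP => Es; apply: nonsq; exists (val s)%:R; apply/residue_eq0P.
  by rewrite rmorphD rmorphXn rmorph_nat natr_Zp.
apply/residue_eq0P; apply: (eq0_of_nonsquare_eqs nonsqF (two_Fp_neq0 p_odd)
  (subr0_eq E2) (subr0_eq E1) (subr0_eq E0)).
Qed.

(* The hypotheses are the differences of the x^2-, x- and constant coefficients of the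
   theorem's polynomials for m = 2k + 2, after substituting B = p^k b etc. *)
Lemma rdvd_diff_of_coef_congr m (zeta A A' b b' c c' : R) : odd p ->
  ~ (exists x : R, rdvd P (x ^+ 2 + zeta)) ->
  rdvd (P ^+ m.+1) (P * (A - A') *+ 2 - P ^+ m * (b ^+ 2 - b' ^+ 2)) ->
  rdvd (P ^+ m.+1) (P ^+ m * (b' * c' - b * c) *+ 2) ->
  rdvd (P ^+ m.+1)
    (P * (A - A') * (P * (A + A') + zeta *+ 2) - P ^+ m * (c ^+ 2 - c' ^+ 2)) ->
  rdvd (P ^+ m) (A - A').
Proof.
case: m => [|n] p_odd nonsq [t2 E2] [t1 E1] [t0 E0].
  by exists (A - A'); rewrite expr0 mul1r.
have [d Ed] : rdvd (P ^+ n) (A - A').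
  apply: rdvd_pX_mul2 => //; exists (b ^+ 2 - b' ^+ 2 + P * t2).
  by apply: lreg_p; apply: (eq_of_subr_eq E2); rewrite !exprS; ring.
rewrite Ed in E2 E0.
have coef2 : rdvd P (d *+ 2 - (b ^+ 2 - b' ^+ 2)).
  by exists t2; apply: (@lreg_pX n.+1); apply: (eq_of_subr_eq E2); rewrite !exprS; ring.
have coef1 : rdvd P (b * c - b' * c').
  apply: rdvd_p_mul2 => //; exists (- t1).
  by apply: (@lreg_pX n.+1); apply: (eq_of_subr_eq (esym E1)); rewrite !exprS; ring.
have coef0 : rdvd P (zeta * d *+ 2 - (c ^+ 2 - c' ^+ 2)).
  exists (t0 - d * (A + A')).
  by apply: (@lreg_pX n.+1); apply: (eq_of_subr_eq E0); rewrite !exprS; ring.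
have [e De] := rdvd_p_of_residue_eqs p_odd nonsq coef2 coef1 coef0.
by exists e; rewrite Ed De exprSr mulrA.
Qed.

End PadicIntegers.

Section QuarticCoefficients.
Variable R : comNzRingType.
Implicit Types m a q B C : R.

Lemma coef_X2C_sqr a i :
  (('X ^+ 2 + a%:P) ^+ 2)`_i =
  (i == 4)%:R + a *+ 2 * (i == 2)%:R + a ^+ 2 * (i == 0)%:R.
Proof.
have -> : ('X ^+ 2 + a%:P) ^+ 2 =
    'X ^+ 4 + (a *+ 2)%:P * 'X ^+ 2 + (a ^+ 2)%:P * 'X ^+ 0.
  by rewrite polyCMn rmorphXn; ring.
by rewrite !coefD !coefCM !coefXn.
Qed.

Lemma coef_X2C_sqr_sub a q B C i :
  (('X ^+ 2 + a%:P) ^+ 2 - q%:P * (B *: 'X + C%:P) ^+ 2)`_i =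
  (i == 4)%:R + (a *+ 2 - q * B ^+ 2) * (i == 2)%:R
    - q * B * C *+ 2 * (i == 1)%:R + (a ^+ 2 - q * C ^+ 2) * (i == 0)%:R.
Proof.
have -> : ('X ^+ 2 + a%:P) ^+ 2 - q%:P * (B *: 'X + C%:P) ^+ 2 =
    'X ^+ 4 + (a *+ 2 - q * B ^+ 2)%:P * 'X ^+ 2 - (q * B * C *+ 2)%:P * 'X
      + (a ^+ 2 - q * C ^+ 2)%:P * 'X ^+ 0.
  by rewrite -mul_polyC !(polyCB, polyCM, polyCMn, rmorphXn); ring.
by rewrite !(coefD, coefN) !coefCM !coefXn coefX.
Qed.

Lemma polycong_X2C_sqr m a a' :
  rdvd m (a - a') -> polycong m (('X ^+ 2 + a%:P) ^+ 2) (('X ^+ 2 + a'%:P) ^+ 2).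
Proof.
case=> t Et i; rewrite !coef_X2C_sqr.
have -> : a = a' + m * t by rewrite -Et addrC subrK.
by exists (t *+ 2 * (i == 2)%:R + t * (a' *+ 2 + m * t) * (i == 0)%:R); ring.
Qed.

End QuarticCoefficients.

Theorem claim2 (p k : nat) (zeta A B C A' B' C' : Zpadic p) :
  prime p -> odd p ->
  ~ (exists x : Zpadic p, rdvd (p%:R) (x ^+ 2 + zeta)) ->
  rdvd (p%:R ^+ k) B -> rdvd (p%:R ^+ k) C ->
  rdvd (p%:R ^+ k) B' -> rdvd (p%:R ^+ k) C' ->
  polycong (p%:R ^+ (2 * k + 3))
    (('X ^+ 2 + (p%:R * A + zeta)%:P) ^+ 2
       - (p%:R ^+ 2)%:P * (B *: 'X + C%:P) ^+ 2)
    (('X ^+ 2 + (p%:R * A' + zeta)%:P) ^+ 2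
       - (p%:R ^+ 2)%:P * (B' *: 'X + C'%:P) ^+ 2) ->
  rdvd (p%:R ^+ (2 * k + 2)) (A - A') /\
  polycong (p%:R ^+ (2 * k + 3))
    (('X ^+ 2 + (p%:R * A + zeta)%:P) ^+ 2)
    (('X ^+ 2 + (p%:R * A' + zeta)%:P) ^+ 2).
Proof.
move=> p_prime p_odd nonsq [b ->] [c ->] [b' ->] [c' ->] cong.
have powE : (p%:R : Zpadic p) ^+ (2 * k + 2) = (p%:R ^+ k) ^+ 2 * p%:R ^+ 2.
  by rewrite exprD mulnC exprM.
have modE : (2 * k + 3 = (2 * k + 2).+1)%N by rewrite addnS.
rewrite modE in cong *.
have dvdA : rdvd (p%:R ^+ (2 * k + 2)) (A - A').
  apply: (rdvd_diff_of_coef_congr (b := b) (b' := b') (c := c) (c' := c')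
    p_prime p_odd nonsq).
  - by apply: (rdvd_eq_trans (cong 2%N)); rewrite !coef_X2C_sqr_sub powE /=; ring.
  - by apply: (rdvd_eq_trans (cong 1%N)); rewrite !coef_X2C_sqr_sub powE /=; ring.
  - by apply: (rdvd_eq_trans (cong 0%N)); rewrite !coef_X2C_sqr_sub powE /=; ring.
split=> //; apply: polycong_X2C_sqr.
by case: dvdA => t Et; exists t; rewrite exprS -mulrA -Et; ring.
Qed.
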